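(* Let $F(x)=\frac{1-\sqrt{1-4x}}{2x}=\sum_{n\ge0}\frac{1}{n+1}\binom{2n}{n}x^n$ be the generating function of the Catalan numbers. Let $k$ be a positive integer and $m\in\mathbb{N}$. Then $D_{2k,1-k-m}(N)=0$ for $N=1,\dots,m+k-1$ and $D_{2k,1-k-m}(n+m+k)=(-1)^{\binom{m+k}{2}}D_{2k,1-k+m}(n)$ for all $n\in\mathbb{N}$; and $D_{2k-1,2-k-m}(N)=0$ for $N=1,\dots,m+k-2$ and $D_{2k-1,2-k-m}(n+m+k-1)=(-1)^{\binom{m+k-1}{2}}D_{2k-1,1-k+m}(n)$ for all $n\in\mathbb{N}$.
   Context: For a power series $F(x)=\sum_{n\ge0}a_nx^n$ and $K\ge1$, write $F(x)^K=\sum_{n\ge0}a_{K,n}x^n$ and set $a_{K,n}=0$ for $n<0$. For $M\in\mathbb{Z}$ and $K,N\in\mathbb{N}$ with $K\ge1$, define the shifted Hankel determinant $D_{K,M}(N)=\det(a_{K,i+j+M})_{i,j=0}^{N-1}$, with $D_{K,M}(0)=1$. $\mathbb{N}=\{0,1,2,\dots\}$. *)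

From HB Require Import structures.
From mathcomp Require Import all_boot all_order all_algebra.
Set Implicit Arguments. Unset Strict Implicit. Unset Printing Implicit Defensive.
Import Order.TTheory GRing.Theory Num.Theory.
Local Open Scope ring_scope.

Definition catF (n : nat) : rat := ('C(n.*2, n))%:R / (n.+1)%:R.

(* Cauchy power of a power series given by its coefficient sequence:
   spow a K n = [x^n] (sum_i a i x^i)^K ; spow a 0 = constant series 1. *)
Fixpoint spow (a : nat -> rat) (K : nat) (n : nat) : rat :=
  match K with
  | O => if n == 0%N then 1 else 0
  | S K' => \sum_(i < n.+1) a i * spow a K' (n - i)%N
  end.

Definition aKn (K : nat) (n : int) : rat :=
  match n with
  | Posz n' => spow catF K n'
  | Negz _ => 0
  end.

Definition hankelD (K : nat) (M : int) (N : nat) : rat :=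
  \det (\matrix_(i < N, j < N) aKn K ((i + j)%N%:Z + M)).

From mathcomp Require Import all_boot all_order all_algebra.
From mathcomp Require Import zify ring.
Set Implicit Arguments.
Unset Strict Implicit.
Unset Printing Implicit Defensive.
Import Order.TTheory GRing.Theory Num.Theory.
Local Open Scope ring_scope.

(* Write F for the Catalan series, so F = 1 + x F^2.  Then y = 1 - x F and
   w = x F satisfy y + w = 1, y w = x and F y = 1, hence y^K + w^K = L_K(x)
   for the polynomials L_0 = 2, L_1 = 1, L_(K+2) = L_(K+1) - x L_K, of degree
   at most K/2.  Multiplying by F^K gives F^-K = L_K(x) - x^K F^K, so the
   coefficient of x^t in F^-K is -a_(K,t-K) as soon as 2t > K.
   If f_0 = 1 and g is the inverse series of f, multiplying the Hankel matrix
   (f_(i+j+1-s)) of size s + n on the left by the unitriangular Toeplitz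
   matrix (g_(i-j)) makes it block triangular, with the s x s reversed
   identity and -(g_(s+1+i+j)) times a unitriangular Toeplitz matrix as
   diagonal blocks.  Taking f = F^K and s = m + k, resp. m + k - 1, gives the
   Hankel identities; the vanishing ones hold because the first row is zero.
   Truncated power series are handled as polynomials modulo 'X^D. *)

Section PolyCongruence.
Variable R : fieldType.
Implicit Types (p q r t d : {poly R}) (n : nat).

Lemma eq_modpM d p q r t : p %% d = q %% d -> r %% d = t %% d ->
  (p * r) %% d = (q * t) %% d.
Proof.
move=> epq ert.
rewrite -modp_mul ert modp_mul [p * t]mulrC -[(t * p) %% d]modp_mul epq.
by rewrite modp_mul mulrC.
Qed.

Lemma eq_modpX d p q n : p %% d = q %% d -> (p ^+ n) %% d = (q ^+ n) %% d.
Proof.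
by move=> epq; elim: n => [|n IHn] //; rewrite !exprS; apply: eq_modpM.
Qed.

Lemma eq_modXnP n p q : p %% 'X^n = q %% 'X^n <-> forall i, (i < n)%N -> p`_i = q`_i.
Proof.
rewrite -!Pdiv.IdomainMonic.take_poly_modp; split=> [epq i ltin | epq].
  by have := congr1 (fun s : {poly R} => s`_i) epq; rewrite !coef_take_poly ltin.
by apply/polyP=> i; rewrite !coef_take_poly; case: ifP => // /epq.
Qed.

End PolyCongruence.

Section Lucas.
Variable R : nzRingType.

Fixpoint lucas (k : nat) : {poly R} :=
  match k with
  | 0 => 2%:R
  | k1.+1 => if k1 is k2.+1 then lucas k1 - 'X * lucas k2 else 1
  end.

Lemma lucasSS k : lucas k.+2 = lucas k.+1 - 'X * lucas k.
Proof. by []. Qed.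

Lemma coef_lucas_eq0 k t : (k < t.*2)%N -> (lucas k)`_t = 0.
Proof.
elim/ltn_ind: k t => -[|[|k]] IH t ltkt.
- by rewrite coefMn coef1; case: t ltkt => // t _; rewrite mul0rn.
- by rewrite coef1; case: t ltkt.
rewrite lucasSS coefB coefXM; case: t ltkt => // t ltkt.
by rewrite !IH ?if_same ?subrr //; rewrite doubleS in ltkt; lia.
Qed.

End Lucas.

Arguments lucas {R}.

Lemma lucas_modp (R : fieldType) (d y w : {poly R}) k : y + w = 1 -> (y * w) %% d = 'X %% d ->
  (y ^+ k + w ^+ k) %% d = lucas k %% d.
Proof.
move=> yw1 ywX; elim/ltn_ind: k => -[|[|k]] IH.
- by rewrite !expr0.
- by rewrite !expr1 yw1.
have -> : y ^+ k.+2 + w ^+ k.+2 = y ^+ k.+1 + w ^+ k.+1 - y * w * (y ^+ k + w ^+ k).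
  have -> : w = 1 - y by rewrite -yw1 addrAC subrr add0r.
  rewrite !exprS; move: (y ^+ k) ((1 - y) ^+ k) => a b; ring.
rewrite lucasSS !(modpD _ _ (- _)) !modpN IH //.
by rewrite (eq_modpM ywX (IH k _)).
Qed.

Lemma coef_diffop (R : comNzRingType) (c : R) (p : {poly R}) j :
  (('X - c%:P * 'X^2) * p^`())`_j = p`_j *+ j - c * (p`_j.-1 *+ j.-1).
Proof.
have coefXderiv k : ('X * p^`())`_k = p`_k *+ k.
  by case: k => [|k]; rewrite coefXM ?mulr0n // coef_deriv.
rewrite mulrBl -mulrA expr2 -mulrA coefB coefCM !coefXderiv coefXM.
by case: j => [|j]; rewrite ?mulr0n ?coefXderiv.
Qed.

Lemma diffeq_modXn_eq0 (R : numFieldType) (c : R) n (p : {poly R}) :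
  (('X - c%:P * 'X^2) * p^`() + p) %% 'X^n = 0 -> p %% 'X^n = 0.
Proof.
rewrite -(mod0p 'X^n) => /eq_modXnP h; apply/eq_modXnP => i; rewrite coef0.
elim: i => [|i IH] lti; have := h _ lti;
  rewrite coef0 coefD coef_diffop.
  by rewrite mulr0n mulr0 subr0 add0r.
rewrite (IH (ltnW lti)) mul0rn mulr0 subr0 -mulrSr => /eqP.
by rewrite -mulr_natr mulf_eq0 pnatr_eq0 orbF => /eqP.
Qed.

Lemma bin_double_succ n : ('C(n.+1.*2, n.+1) * n.+1 = 'C(n.*2, n) * (n.*2.+1).*2)%N.
Proof.
have h1 := mul_bin_diag (n.*2.+2) n.
have h2 := mul_bin_down (n.*2.+1) n.
rewrite /= in h1 h2.
have e : (n.*2.+1 - n = n.+1)%N by rewrite -addnn; lia.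
rewrite e in h2.
apply/eqP; rewrite -(eqn_pmul2r (ltn0Sn n)); apply/eqP.
rewrite (mulnC 'C(_, n.+1)) doubleS -h1 -!muln2.
have -> : (n * 2).+2 = (n.+1 * 2)%N by lia.
rewrite -!muln2 in h2; nia.
Qed.

Lemma catF_succ n : n.+2%:R * catF n.+1 = (n.*2.+1).*2%:R * catF n.
Proof.
have n1_neq0 : n.+1%:R != 0 :> rat by rewrite pnatr_eq0.
have := congr1 (fun x : nat => x%:R : rat) (bin_double_succ n); rewrite !natrM => e.
rewrite /catF mulrC divfK ?pnatr_eq0 //; apply: (mulIf n1_neq0).
by rewrite e; field; rewrite -natr1 addrC in n1_neq0.
Qed.

Definition catPoly (D : nat) : {poly rat} := \poly_(i < D) catF i.

Lemma coef_catPoly_pow D K t : (t < D)%N -> ((catPoly D) ^+ K)`_t = spow catF K t.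
Proof.
elim: K t => [|K IH] t ltt; first by rewrite expr0 coef1 /=; case: (t == 0%N).
rewrite exprS coefM [RHS]/=; apply: eq_bigr => i _.
rewrite coef_poly IH; last exact: leq_ltn_trans (leq_subr _ _) ltt.
by rewrite (leq_ltn_trans _ ltt) // -ltnS.
Qed.

(* The recurrence catF_succ, written as a differential equation for F. *)
Lemma catPoly_diffeq D :
  (('X - 4%:P * 'X^2) * (catPoly D)^`() + catPoly D - 2%:P * ('X * catPoly D) - 1)
    %% 'X^D = 0.
Proof.
rewrite -(mod0p 'X^D); apply/eq_modXnP => -[|i] lti;
  rewrite coef0 !(coefD, coefN, coefCM) coef_diffop coefXM coef1 !coef_poly ?lti.
  by rewrite /catF bin0 !mulr0n mulr0 !subr0 add0r divr1 subrr.
rewrite (ltnW lti) /=.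
have := catF_succ i; move: (catF i.+1) (catF i) => a b e.
rewrite -[RHS](subrr (i.+2%:R * a)) {2}e -!muln2; ring.
Qed.

(* E = x F^2 - F + 1 satisfies the homogeneous equation (x - 4x^2) E' + E = 0
   modulo 'X^D, whose only truncated solution is 0. *)
Lemma catPoly_quadratic D : (1 + 'X * catPoly D ^+ 2) %% 'X^D = catPoly D %% 'X^D.
Proof.
have := catPoly_diffeq D; move: (catPoly D) => C Cdiffeq.
pose E : {poly rat} := 'X * C ^+ 2 - C + 1.
have : (('X - 4%:P * 'X^2) * E^`() + E) %% 'X^D = 0.
  have -> : ('X - 4%:P * 'X^2) * E^`() + E =
      (('X - 4%:P * 'X^2) * C^`() + C - 2%:P * ('X * C) - 1) * (2%:P * ('X * C) - 1).
    by rewrite /E !derivE !polyC_natr; ring.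
  by rewrite mulrC -modp_mul Cdiffeq mulr0 mod0p.
move/diffeq_modXn_eq0 => E0.
by rewrite (_ : 1 + _ = E + C) 1?modpD ?E0 ?add0r // /E; ring.
Qed.

Lemma catPoly_pow_inv D K :
  ((catPoly D) ^+ K * (lucas K - 'X^K * (catPoly D) ^+ K)) %% 'X^D = 1 %% 'X^D.
Proof.
have := catPoly_quadratic D; move: (catPoly D) => C quad.
pose Y := 1 - 'X * C; pose W := 'X * C.
have CY1 : (C * Y) %% 'X^D = 1 %% 'X^D.
  rewrite (_ : C * Y = C - 'X * C ^+ 2); last by rewrite /Y; ring.
  by rewrite modpD modpN -quad modpD addrK.
have YWX : (Y * W) %% 'X^D = 'X %% 'X^D.
  rewrite (_ : Y * W = 'X * (C * Y)); last by rewrite /W; ring.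
  by rewrite (eq_modpM (erefl ('X %% 'X^D)) CY1) mulr1.
have -> : 1 %% 'X^D = ((C * Y) ^+ K) %% 'X^D by rewrite (eq_modpX K CY1) expr1n.
have -> : (C * Y) ^+ K = C ^+ K * (Y ^+ K + W ^+ K) - 'X^K * C ^+ K * C ^+ K.
  by rewrite /W !exprMn; ring.
rewrite mulrBr !(modpD _ _ (- _)) !modpN mulrA [C ^+ K * 'X^K]mulrC.
congr (_ - _); apply: eq_modpM => //.
by rewrite lucas_modp // /Y /W subrK.
Qed.

Definition zext (R : zmodType) (f : nat -> R) (t : int) : R :=
  if t is Posz n then f n else 0.

Lemma zext_subn (R : zmodType) (f : nat -> R) t d :
  zext f (t%:Z - d%:Z) = if (t < d)%N then 0 else f (t - d)%N.
Proof.
case: ltnP => [lt_td | le_dt]; last by rewrite subzn.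
have -> : t%:Z - d%:Z = Negz (d - t).-1.
  by rewrite NegzE prednK ?subn_gt0 // -subzn ?(ltnW lt_td) // opprB.
by [].
Qed.

Section ConvolutionInverse.
Variables (R : comNzRingType) (f g : nat -> R).
Hypothesis fg : forall p, \sum_(t < p.+1) f t * g (p - t)%N = (p == 0%N)%:R.

Lemma conv_inv_nat p : \sum_(0 <= t < p.+1) f t * g (p - t)%N = (p == 0%N)%:R.
Proof. by rewrite big_mkord fg. Qed.

Lemma conv_inv_shiftl d i :
  \sum_(0 <= l < i.+1) g (i - l)%N * zext f (l%:Z - d%:Z) = (i == d)%:R.
Proof.
case/orP: (leqVgt d i) => [le_di | lt_id]; last first.
  rewrite ltn_eqF // big_mkord big1 // => l _.
  by rewrite zext_subn (leq_trans (ltn_ord l) lt_id) mulr0.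
rewrite (big_cat_nat _ (n := d)) //=; last exact: leqW.
rewrite big_nat_cond big1 ?add0r; last first.
  by move=> l /andP[/andP[_ lt_ld] _]; rewrite zext_subn lt_ld mulr0.
have -> : (i == d) = (i - d == 0)%N by apply/eqP/eqP; lia.
rewrite -{1}[d]add0n big_addn subSn // -(conv_inv_nat (i - d)).
apply: eq_bigr => l _; rewrite zext_subn ltnNge leq_addl /= addnK mulrC.
by congr (_ * g _); lia.
Qed.

Lemma conv_inv_shiftr e i :
  \sum_(0 <= l < i.+1) g (i - l)%N * f (l + e.+1)%N =
  - \sum_(0 <= t < e.+1) f t * g (i + e.+1 - t)%N.
Proof.
apply/eqP; rewrite -addr_eq0 addrC; apply/eqP.
have := conv_inv_nat (i + e.+1); rewrite (big_cat_nat _ (n := e.+1)) //=; last by lia.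
rewrite (big_addn 0 _ e.+1) (_ : (i + e.+1 == 0)%N = false) ?addnS // mulr0n => conv.
rewrite -[RHS]conv; congr (_ + _).
rewrite (_ : (i + e).+2 - e.+1 = i.+1)%N; last by lia.
by apply: eq_bigr => l _; rewrite mulrC; congr (_ * g _); lia.
Qed.

End ConvolutionInverse.

Definition lower_toeplitz (R : nzRingType) m (g : nat -> R) : 'M[R]_m :=
  \matrix_(i, j) if (j <= i)%N then g (i - j)%N else 0.

Lemma det_lower_toeplitz (R : comNzRingType) m (g : nat -> R) :
  \det (lower_toeplitz m g) = g 0%N ^+ m.
Proof.
rewrite det_trig; last by apply/is_trig_mxP => i j lt_ij; rewrite mxE leqNgt lt_ij.
by rewrite (eq_bigr (fun=> g 0%N)) ?prodr_const ?card_ord // => i _; rewrite mxE leqnn subnn.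
Qed.

Lemma det_antidiag (R : comNzRingType) s :
  \det (\matrix_(i, j) ((i + j).+1 == s)%N%:R : 'M[R]_s) = (-1) ^+ 'C(s, 2).
Proof.
elim: s => [|s IH]; first by rewrite det_mx00.
rewrite (expand_det_row _ ord0) (bigD1 ord_max) //= big1 ?addr0; last first.
  move=> j ne_j_max; rewrite mxE add0n eqSS.
  have -> : (j == s :> nat) = false.
    by apply/negbTE; move: ne_j_max; apply: contra => /eqP e; apply/eqP/val_inj.
  by rewrite mul0r.
rewrite mxE add0n eqxx mul1r /cofactor add0n.
have -> : row' ord0 (col' ord_max (\matrix_(i, j) ((i + j).+1 == s.+1)%N%:R))
   = \matrix_(i, j) ((i + j).+1 == s)%N%:R :> 'M[R]_s.
  by apply/matrixP => i j; rewrite !mxE lift0 lift_max addSn eqSS.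
by rewrite IH binS bin1 exprD mulrC.
Qed.

Lemma big_ord_if_leq (R : zmodType) L i (F : nat -> R) : (i < L)%N ->
  \sum_(l < L) (if (l <= i)%N then F l else 0) = \sum_(0 <= l < i.+1) F l.
Proof.
move=> lt_iL; rewrite -(big_mkord xpredT (fun l => if (l <= i)%N then F l else 0)).
rewrite (big_cat_nat _ (n := i.+1)) //= [X in _ + X]big_nat_cond [X in _ + X]big1 ?addr0.
  by apply: eq_big_nat => l /andP[_ lt_li]; rewrite -ltnS lt_li.
by move=> l /andP[/andP[lt_il _] _]; rewrite leqNgt lt_il.
Qed.

Section HankelConvolutionInverse.
Variables (R : comNzRingType) (f g : nat -> R) (s n : nat).
Hypotheses (f0 : f 0%N = 1)
  (fg : forall p, \sum_(t < p.+1) f t * g (p - t)%N = (p == 0%N)%:R).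

Let A : 'M[R]_(s + n) := \matrix_(i, j) zext f ((i + j)%N%:Z + (1 - s%:Z)).
Let V : 'M[R]_(s + n) := lower_toeplitz (s + n) g.

Lemma mul_toeplitz_hankel_entry i j :
  (V *m A) i j = \sum_(0 <= l < i.+1) g (i - l)%N * zext f ((l + j)%N%:Z + (1 - s%:Z)).
Proof.
rewrite mxE -(big_ord_if_leq _ (ltn_ord i)); apply: eq_bigr => l _; rewrite !mxE.
by case: ifP => _; rewrite ?mul0r.
Qed.

Lemma mul_toeplitz_hankel_left (i j : 'I_(s + n)) : (j < s)%N ->
  (V *m A) i j = ((i + j).+1 == s)%N%:R.
Proof.
move=> lt_js; rewrite mul_toeplitz_hankel_entry.
rewrite (eq_bigr (fun l => g (i - l)%N * zext f (l%:Z - (s - j.+1)%N%:Z))); last first.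
  by move=> l _; congr (_ * zext f _); lia.
by rewrite conv_inv_shiftl //; congr (_%:R); apply/eqP/eqP; lia.
Qed.

Lemma mul_toeplitz_hankel_right (i : 'I_(s + n)) (j : 'I_n) :
  (V *m A) i (rshift s j) = - \sum_(0 <= t < j.+1) f t * g (i + j.+1 - t)%N.
Proof.
rewrite mul_toeplitz_hankel_entry -conv_inv_shiftr //; apply: eq_bigr => l _ /=.
by rewrite (_ : (_ + _)%R = (l + j.+1)%N%:Z) //; lia.
Qed.

Lemma toeplitz_hankel_block :
  V *m A = block_mx (\matrix_(i, j) ((i + j).+1 == s)%N%:R) (ursubmx (V *m A))
    0 ((\matrix_(i, j < n) - g (s + 1 + i + j)%N) *m (lower_toeplitz n f)^T).
Proof.
rewrite -[LHS]submxK; congr block_mx; apply/matrixP => i j.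
- by rewrite 2![LHS]mxE (@mul_toeplitz_hankel_left _ (lshift n j) (ltn_ord j)) mxE.
- rewrite 2![LHS]mxE (@mul_toeplitz_hankel_left _ (lshift n j) (ltn_ord j)) /= mxE.
  by rewrite (_ : _ == s = false) //; apply/negbTE; have := ltn_ord j; lia.
rewrite 2![LHS]mxE mul_toeplitz_hankel_right mxE -sumrN.
pose F u := - g (s + 1 + i + u)%N * f (j - u)%N.
rewrite (eq_bigr (fun u : 'I_n => if (u <= j)%N then F u else 0)).
  rewrite (big_ord_if_leq F) // big_nat_rev; apply: eq_big_nat => u /andP[_ lt_uj] /=.
  by rewrite /F add0n mulNr mulrC; congr (- (g _ * f _)); lia.
by move=> u _; rewrite !mxE; case: ifP => _; rewrite ?mulr0.
Qed.

Lemma det_hankel_conv_inv :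
  \det A = (-1) ^+ 'C(s, 2) * \det (\matrix_(i, j < n) - g (s + 1 + i + j)%N).
Proof.
have g0 : g 0%N = 1 by have := fg 0; rewrite big_ord1 f0 mul1r => ->.
have detV : \det V = 1 by rewrite det_lower_toeplitz g0 expr1n.
rewrite -[LHS]mul1r -[X in X * _]detV -det_mulmx toeplitz_hankel_block.
rewrite det_ublock det_antidiag.
by rewrite det_mulmx det_tr det_lower_toeplitz f0 expr1n mulr1.
Qed.

End HankelConvolutionInverse.

Lemma aKnE K : aKn K = zext (spow catF K).
Proof. by []. Qed.

Lemma spow_catF0 K : spow catF K 0 = 1.
Proof. by elim: K => //= K IH; rewrite big_ord1 IH mulr1 /catF bin0 divr1. Qed.

Definition catF_inv K t := (lucas K)`_t - aKn K (t%:Z - K%:Z).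

Lemma catF_inv_conv K p :
  \sum_(t < p.+1) spow catF K t * catF_inv K (p - t) = (p == 0%N)%:R.
Proof.
have /eq_modXnP/(_ p (ltnSn p)) := catPoly_pow_inv p.+1 K.
rewrite coef1 coefM => <-; apply: eq_bigr => t _.
have lt_tp := ltn_ord t.
rewrite coef_catPoly_pow // coefB coefXnM /catF_inv aKnE zext_subn.
by case: ifP => // _; rewrite coef_catPoly_pow //; lia.
Qed.

Lemma catF_inv_high K t : (K < t.*2)%N -> catF_inv K t = - aKn K (t%:Z - K%:Z).
Proof. by move=> ltK; rewrite /catF_inv coef_lucas_eq0 // sub0r. Qed.

Lemma hankelD_eq0 K M N : (0 < N)%N -> (N.-1)%:Z + M < 0 -> hankelD K M N = 0.
Proof.
case: N => // N _ hM; rewrite /hankelD (expand_det_row _ ord0) big1 // => j _.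
rewrite mxE add0n.
have : j%:Z + M < 0 by have := ltn_ord j; lia.
by case: (j%:Z + M) => // t _; rewrite mul0r.
Qed.

Lemma hankelD_shift K M M' s n :
  M = 1 - s%:Z -> M' = (s + 1)%:Z - K%:Z -> (K < (s + 1).*2)%N ->
  hankelD K M (s + n) = (-1) ^+ 'C(s, 2) * hankelD K M' n.
Proof.
move=> -> -> ltK.
rewrite /hankelD (det_hankel_conv_inv s n (spow_catF0 K) (catF_inv_conv K)).
congr (_ * \det _); apply/matrixP => i j; rewrite !mxE catF_inv_high ?opprK; last by lia.
by congr (aKn K _); lia.
Qed.

Theorem theorem1p1 (k m : nat) (hk : (0 < k)%N) :
  [/\ (forall N : nat, (1 <= N <= m + k - 1)%N ->
         hankelD (k.*2) (1 - k%:Z - m%:Z) N = 0),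
      (forall n : nat,
         hankelD (k.*2) (1 - k%:Z - m%:Z) (n + m + k)%N
         = (-1) ^+ 'C(m + k, 2) * hankelD (k.*2) (1 - k%:Z + m%:Z) n),
      (forall N : nat, (1 <= N <= m + k - 2)%N ->
         hankelD (k.*2 - 1)%N (2 - k%:Z - m%:Z) N = 0) &
      (forall n : nat,
         hankelD (k.*2 - 1)%N (2 - k%:Z - m%:Z) (n + m + k - 1)%N
         = (-1) ^+ 'C(m + k - 1, 2) * hankelD (k.*2 - 1)%N (1 - k%:Z + m%:Z) n)].
Proof.
split=> [N /andP[N_gt0 le_N] | n | N /andP[N_gt0 le_N] | n].
- by apply: hankelD_eq0 => //; lia.
- by rewrite (_ : n + m + k = m + k + n)%N; [apply: hankelD_shift | ]; lia.
- by apply: hankelD_eq0 => //; lia.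
- by rewrite (_ : n + m + k - 1 = m + k - 1 + n)%N; [apply: hankelD_shift | ]; lia.
Qed.
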